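(* Let $R=S/J$ be a complete intersection SAGA of codimension $n+1$ presented by quadrics, and suppose $w,z\in R^1\setminus\{0\}$ satisfy $zw=0$. Then $(z)=(0:w)$ as ideals of $R$, and $\bar R=R/(z)$ is a complete intersection SAGA of codimension $n$ presented by quadrics. In particular, $\dim K^s_w=\dim R^{s-1}-\dim K^{s-1}_z$ for all $s\ge1$.
   Context: $\mathbb K$ is an algebraically closed field of characteristic $0$. A complete intersection SAGA of codimension $n+1$ presented by quadrics is $R=S/J$, $S=\mathbb K[x_0,\dots,x_n]$, $J$ generated by a regular sequence of $n+1$ homogeneous quadrics (socle degree $n+1$). For $q\in R^s$, $K^a_q=\ker(q\cdot:R^a\to R^{a+s})$, with $K^0_q=\ker(q\cdot:R^0\to R^s)$. $(0:w)=\{r\in R\mid rw=0\}$. *)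

From HB Require Import structures.
From mathcomp Require Import all_boot all_order all_algebra.
From mathcomp Require Import mpoly.
Set Implicit Arguments. Unset Strict Implicit. Unset Printing Implicit Defensive.
Import GRing.Theory.
Local Open Scope ring_scope.

Section CIDefs.
Variable K : fieldType.

Definition mem_ideal (m : nat) (gens : seq {mpoly K[m]}) (p : {mpoly K[m]}) : Prop :=
  exists c : seq {mpoly K[m]}, p = \sum_(i < size gens) c`_i * gens`_i.

Definition regular_seq (m : nat) (gens : seq {mpoly K[m]}) : Prop :=
  ~ mem_ideal gens 1 /\
  forall i, (i < size gens)%N -> forall g : {mpoly K[m]},
    mem_ideal (take i gens) (g * gens`_i) -> mem_ideal (take i gens) g.

(* S/(qs), S = K[x_0..x_{m-1}], is a complete intersection SAGA of
   codimension m presented by quadrics: qs is a regular sequence of m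
   homogeneous quadrics in the m variables. *)
Definition CI_quadric_SAGA (m : nat) (qs : seq {mpoly K[m]}) : Prop :=
  size qs = m /\ (forall q, q \in qs -> q \is 2.-homog) /\ regular_seq qs.

Definition indep_mod (m : nat) (qs : seq {mpoly K[m]}) (gs : seq {mpoly K[m]}) : Prop :=
  forall c : seq K, mem_ideal qs (\sum_(i < size gs) c`_i *: gs`_i) ->
    forall i, (i < size gs)%N -> c`_i = 0.

(* the image in S/(qs) of the subspace {g | P g} of S has K-dimension d *)
Definition dim_mod (m : nat) (qs : seq {mpoly K[m]}) (P : {mpoly K[m]} -> Prop) (d : nat) : Prop :=
  (exists gs : seq {mpoly K[m]}, size gs = d /\ (forall g, g \in gs -> P g) /\ indep_mod qs gs) /\
  (forall gs : seq {mpoly K[m]}, (forall g, g \in gs -> P g) -> indep_mod qs gs -> (size gs <= d)%N).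

Definition dimR (m : nat) (qs : seq {mpoly K[m]}) (e d : nat) : Prop :=
  dim_mod qs (fun g => g \is e.-homog) d.

(* dim K^a_q = d, where K^a_q = ker (q . : R^a -> R^(a+s)), q a representative in S *)
Definition dimK (m : nat) (qs : seq {mpoly K[m]}) (e : nat) (q : {mpoly K[m]}) (d : nat) : Prop :=
  dim_mod qs (fun g => g \is e.-homog /\ mem_ideal qs (g * q)) d.

End CIDefs.

From HB Require Import structures.
From mathcomp Require Import all_boot all_order all_algebra.
From mathcomp Require Import mpoly.
From mathcomp Require Import zify.
From Stdlib Require Import Classical ClassicalEpsilon.
Set Implicit Arguments. Unset Strict Implicit. Unset Printing Implicit Defensive.
Import GRing.Theory.
Local Open Scope ring_scope.

(* Since [zw] is a quadric in [(qs)], it is a scalar combination of the quadrics and can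
   replace one of them; regular sequences of forms may be permuted, so [(qs) = (P, zw)] with
   [P, zw] regular.  Then [w] is a nonzerodivisor modulo [(P)], whence [(0 : w) = (z)], and
   [z, P] is regular, so eliminating the variable that [z] solves for turns [P] into a
   regular sequence of [n] quadrics in [n] variables presenting [R/(z)].  Finally
   multiplication by [z] maps [R^(s-1)] onto [K^s_w] with kernel [K^(s-1)_z]. *)

Local Notation pih d p := (pihomog mdeg d p).

Section Ideals.
Variables (K : fieldType) (m : nat).
Implicit Types (gs hs : seq {mpoly K[m]}) (p q u v a g : {mpoly K[m]}).

Lemma mem_idealP gs p : mem_ideal gs p <->
  exists f : nat -> {mpoly K[m]}, p = \sum_(i < size gs) f i * gs`_i.
Proof.
split=> [[c ->]|[f ->]]; first by exists (fun i => c`_i).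
by exists (mkseq f (size gs)); apply: eq_bigr => i _; rewrite nth_mkseq.
Qed.

Lemma mem_ideal0 gs : mem_ideal gs 0.
Proof. by apply/mem_idealP; exists (fun _ => 0); rewrite big1 // => i _; rewrite mul0r. Qed.

Lemma mem_idealD gs p q : mem_ideal gs p -> mem_ideal gs q -> mem_ideal gs (p + q).
Proof.
move=> /mem_idealP[f ->] /mem_idealP[h ->]; apply/mem_idealP.
by exists (fun i => f i + h i); rewrite -big_split; apply: eq_bigr => i _; rewrite mulrDl.
Qed.

Lemma mem_idealMl gs a p : mem_ideal gs p -> mem_ideal gs (a * p).
Proof.
move=> /mem_idealP[f ->]; apply/mem_idealP.
by exists (fun i => a * f i); rewrite mulr_sumr; apply: eq_bigr => i _; rewrite mulrA.
Qed.

Lemma mem_idealMr gs a p : mem_ideal gs p -> mem_ideal gs (p * a).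
Proof. by rewrite mulrC; apply: mem_idealMl. Qed.

Lemma mem_idealN gs p : mem_ideal gs p -> mem_ideal gs (- p).
Proof. by rewrite -mulN1r; apply: mem_idealMl. Qed.

Lemma mem_idealB gs p q : mem_ideal gs p -> mem_ideal gs q -> mem_ideal gs (p - q).
Proof. by move=> hp /mem_idealN; apply: mem_idealD. Qed.

Lemma mem_idealZ gs c p : mem_ideal gs p -> mem_ideal gs (c *: p).
Proof. by rewrite -mul_mpolyC; apply: mem_idealMl. Qed.

Lemma mem_ideal_sum gs (I : Type) (r : seq I) (P : pred I) (F : I -> {mpoly K[m]}) :
  (forall i, P i -> mem_ideal gs (F i)) -> mem_ideal gs (\sum_(i <- r | P i) F i).
Proof.
move=> h; elim/big_rec: _ => [|i x Pi hx]; first exact: mem_ideal0.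
by apply: mem_idealD => //; apply: h.
Qed.

Lemma mem_ideal_gen gs g : g \in gs -> mem_ideal gs g.
Proof.
move=> gin; apply/mem_idealP; exists (fun i => ((i == index g gs) : bool)%:R).
have hi : (index g gs < size gs)%N by rewrite index_mem.
rewrite (bigD1 (Ordinal hi)) //= eqxx mul1r nth_index // big1 ?addr0 // => j hj.
suff /negbTE -> : (j != index g gs :> nat) by rewrite mul0r.
by apply: contra hj => /eqP e; apply/eqP/val_inj.
Qed.

Lemma sub_mem_ideal gs hs p : (forall g, g \in gs -> mem_ideal hs g) ->
  mem_ideal gs p -> mem_ideal hs p.
Proof.
move=> h /mem_idealP[f ->]; apply: mem_ideal_sum => i _; apply: mem_idealMl.
exact/h/mem_nth.
Qed.

Lemma mem_ideal_cons a gs p : mem_ideal (a :: gs) p <-> exists t, mem_ideal gs (p - t * a).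
Proof.
split=> [/mem_idealP[f ->]|[t /mem_idealP[f hf]]].
  exists (f 0%N); rewrite big_ord_recl /= addrAC subrr add0r.
  by apply/mem_idealP; exists (fun i => f i.+1).
apply/mem_idealP; exists (fun i => if i is i'.+1 then f i' else t).
by rewrite big_ord_recl /= -hf addrC subrK.
Qed.

Lemma mem_ideal_cons0 gs p : mem_ideal (0 :: gs) p -> mem_ideal gs p.
Proof. by case/mem_ideal_cons=> t; rewrite mulr0 subr0. Qed.

Lemma mem_ideal_congM gs u1 u2 v1 v2 : mem_ideal gs (u1 - v1) -> mem_ideal gs (u2 - v2) ->
  mem_ideal gs (u1 * u2 - v1 * v2).
Proof.
have -> : u1 * u2 - v1 * v2 = (u1 - v1) * u2 + v1 * (u2 - v2).
  by rewrite mulrBl mulrBr addrA subrK.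
by move=> h1 h2; apply: mem_idealD; [apply: mem_idealMr | apply: mem_idealMl].
Qed.

Lemma mem_ideal_congX gs u v e : mem_ideal gs (u - v) -> mem_ideal gs (u ^+ e - v ^+ e).
Proof.
move=> h; elim: e => [|e ih]; first by rewrite !expr0 subrr; apply: mem_ideal0.
by rewrite !exprS; apply: mem_ideal_congM.
Qed.

Definition eq_ideal gs hs := forall p, mem_ideal gs p <-> mem_ideal hs p.

Lemma eq_idealP gs hs : (forall g, g \in gs -> mem_ideal hs g) ->
  (forall g, g \in hs -> mem_ideal gs g) -> eq_ideal gs hs.
Proof. by move=> h1 h2 p; split; apply: sub_mem_ideal. Qed.

Lemma eq_ideal_perm gs hs : perm_eq gs hs -> eq_ideal gs hs.
Proof.
move=> e; apply: eq_idealP => g gin; apply: mem_ideal_gen.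
  by rewrite -(perm_mem e).
by rewrite (perm_mem e).
Qed.

Lemma mem_ideal_rcons a gs p : mem_ideal (rcons gs a) p <-> exists t, mem_ideal gs (p - t * a).
Proof. by rewrite -mem_ideal_cons; apply: eq_ideal_perm; rewrite perm_rcons. Qed.

Lemma mem_ideal_rconsr a gs p : mem_ideal gs p -> mem_ideal (rcons gs a) p.
Proof. by move=> h; apply/mem_ideal_rcons; exists 0; rewrite mul0r subr0. Qed.

Lemma eq_ideal_cons a gs hs : eq_ideal gs hs -> eq_ideal (a :: gs) (a :: hs).
Proof. by move=> e p; rewrite !mem_ideal_cons; split=> -[t /e h]; exists t. Qed.

Lemma eq_ideal_cat gs hs t : eq_ideal gs hs -> eq_ideal (gs ++ t) (hs ++ t).
Proof.
move=> e p; rewrite (eq_ideal_perm (permEl (perm_catC gs t))).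
rewrite (eq_ideal_perm (permEl (perm_catC hs t))).
by elim: t p => //= a t ih; apply: eq_ideal_cons.
Qed.

Lemma eq_ideal_rcons gs hs a : eq_ideal gs hs -> eq_ideal (rcons gs a) (rcons hs a).
Proof. by rewrite -!cats1; apply: eq_ideal_cat. Qed.

Lemma mem_ideal_cons_rcons_mul a b gs p :
  mem_ideal (a :: rcons gs (a * b)) p <-> mem_ideal (a :: gs) p.
Proof.
have ha : mem_ideal (a :: gs) a by apply/mem_ideal_gen/mem_head.
apply: eq_idealP => g; rewrite inE ?mem_rcons ?inE.
  case/or3P=> [/eqP -> // | /eqP -> | gin]; first exact: mem_idealMr.
  by apply: mem_ideal_gen; rewrite inE gin orbT.
case/orP=> [/eqP -> | gin]; first by apply/mem_ideal_gen/mem_head.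
by apply: mem_ideal_gen; rewrite inE mem_rcons inE gin !orbT.
Qed.

Definition nonzerodiv gs a := forall g, mem_ideal gs (g * a) -> mem_ideal gs g.

Lemma nonzerodiv_eq_ideal gs hs a : eq_ideal gs hs -> nonzerodiv gs a -> nonzerodiv hs a.
Proof. by move=> e h g /e /h /e. Qed.

Lemma nonzerodivMl gs a b : nonzerodiv gs (a * b) -> nonzerodiv gs b.
Proof. by move=> h g hg; apply: h; rewrite mulrCA; apply: mem_idealMl. Qed.

Lemma nonzerodivMr gs a b : nonzerodiv gs (a * b) -> nonzerodiv gs a.
Proof. by rewrite mulrC; apply: nonzerodivMl. Qed.

(* Regularity of [s] modulo [(gs)], without the properness condition of [regular_seq]. *)
Fixpoint regular_mod gs s : Prop :=
  if s is a :: s' then nonzerodiv gs a /\ regular_mod (rcons gs a) s' else True.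

Lemma regular_mod_eq_ideal gs hs s : eq_ideal gs hs -> regular_mod gs s -> regular_mod hs s.
Proof.
elim: s gs hs => //= a s ih gs hs e [h1 h2]; split; first exact: nonzerodiv_eq_ideal h1.
exact/(ih _ _ (eq_ideal_rcons a e)).
Qed.

Lemma regular_mod_cat gs s t :
  regular_mod gs (s ++ t) <-> regular_mod gs s /\ regular_mod (gs ++ s) t.
Proof.
elim: s gs => [|a s ih] gs /=; first by rewrite cats0; tauto.
by rewrite ih -cats1 -catA /=; tauto.
Qed.

Lemma regular_modE gs s : regular_mod gs s <->
  forall i, (i < size s)%N -> nonzerodiv (gs ++ take i s) s`_i.
Proof.
elim: s gs => [|a s ih] gs /=; first by split => // _ [].
rewrite ih; split=> [[h1 h2] [|i] /=|h]; first by rewrite cats0.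
  by move=> hi; move: (h2 i hi); rewrite -cats1 -catA.
split; first by move: (h 0%N isT); rewrite cats0.
by move=> i hi; move: (h i.+1 hi); rewrite /= -cats1 -catA.
Qed.

Lemma regular_mod_rcons gs s a :
  regular_mod gs (rcons s a) <-> regular_mod gs s /\ nonzerodiv (gs ++ s) a.
Proof. by rewrite -cats1 regular_mod_cat /=; tauto. Qed.

Lemma regular_seqE gs : regular_seq gs <-> ~ mem_ideal gs 1 /\ regular_mod [::] gs.
Proof. by rewrite regular_modE; split=> -[h1 h2]; split. Qed.

End Ideals.

Section LinearCombinations.
Variables (K : fieldType) (m : nat).
Implicit Types (gs A C : seq {mpoly K[m]}) (b : {mpoly K[m]}) (c : seq K).

Definition lincomb c gs := \sum_(i < size gs) c`_i *: gs`_i.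

Lemma lincomb_rcons c gs b : lincomb c (rcons gs b) = lincomb c gs + c`_(size gs) *: b.
Proof.
rewrite /lincomb size_rcons big_ord_recr /= nth_rcons ltnn eqxx; congr (_ + _).
by apply: eq_bigr => i _; rewrite nth_rcons ltn_ord.
Qed.

Lemma lincomb_cat c A C : lincomb c (A ++ C) = lincomb c A + lincomb (drop (size A) c) C.
Proof.
rewrite /lincomb size_cat big_split_ord /=; congr (_ + _).
  by apply: eq_bigr => i _; rewrite nth_cat ltn_ord.
by apply: eq_bigr => i _; rewrite nth_cat ltnNge leq_addr /= addKn nth_drop.
Qed.

Lemma mem_ideal_lincomb J c gs :
  (forall g, g \in gs -> mem_ideal J g) -> mem_ideal J (lincomb c gs).
Proof. by move=> h; apply: mem_ideal_sum => i _; apply/mem_idealZ/h/mem_nth. Qed.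

Lemma lincomb_homog c gs e : (forall g, g \in gs -> g \is e.-homog) -> lincomb c gs \is e.-homog.
Proof. by move=> h; apply: rpred_sum => i _; apply/rpredZ/h/mem_nth. Qed.

End LinearCombinations.

Section Graded.
Variables (K : fieldType) (m : nat).
Implicit Types (gs : seq {mpoly K[m]}) (p q a b g : {mpoly K[m]}).

Definition pos_homog p := exists2 e, (0 < e)%N & p \is e.-homog.
Definition homog_gens gs := forall g, g \in gs -> exists e, g \is e.-homog.
Definition pos_homog_gens gs := forall g, g \in gs -> pos_homog g.

Lemma pos_homog_gens_homog gs : pos_homog_gens gs -> homog_gens gs.
Proof. by move=> h g /h [e _ he]; exists e. Qed.

Lemma pos_homog_gens_cons a gs : pos_homog_gens (a :: gs) <-> pos_homog a /\ pos_homog_gens gs.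
Proof.
split=> [h|[ha h] g]; last by rewrite inE => /orP[/eqP ->|/h].
by split=> [|g gin]; apply: h; rewrite inE ?eqxx ?gin ?orbT.
Qed.

Lemma pos_homog_gens_rcons a gs : pos_homog_gens gs -> pos_homog a -> pos_homog_gens (rcons gs a).
Proof. by move=> h ha g; rewrite mem_rcons inE => /orP[/eqP ->|/h]. Qed.

Lemma homog0E p : p \is 0.-homog -> p = (p@_0)%:MP.
Proof.
move=> hp; apply/mpolyP => mo; rewrite mcoeffC.
case: (eqVneq mo 0%MM) => [->|ne]; first by rewrite mulr1.
by rewrite mulr0; apply: (dhomog_nemf_coeff hp); rewrite mdeg_eq0.
Qed.

Lemma pih_homog k d p : p \is k.-homog -> pih d p = if k == d then p else 0.
Proof.
move=> hp; case: eqP => [<-|ne]; first exact: pihomog_dE.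
by apply: pihomog_ne0 hp; apply/eqP.
Qed.

Lemma pihM e d p q : q \is e.-homog ->
  pih d (p * q) = if (e <= d)%N then pih (d - e) p * q else 0.
Proof.
move=> hq; rewrite {1}[p]mpolyE mulr_suml linear_sum /=.
have -> : (if (e <= d)%N then pih (d - e) p * q else 0) =
    \sum_(mo <- msupp p) (if (e <= d)%N then pih (d - e) (p@_mo *: 'X_[mo]) * q else 0).
  case: ifP => _; last by rewrite big1.
  by rewrite {1}[p]mpolyE linear_sum /= mulr_suml.
apply: eq_bigr => mo _.
have hX : 'X_[mo] * q \is (mdeg mo + e).-homog by apply: dhomogM => //; rewrite dhomogX.
rewrite -scalerAl !linearZ /= (pih_homog _ hX) -scalerAl.
case: (leqP e d) => hed; last by rewrite ifN ?scaler0 //; apply/eqP; lia.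
have hX' : ('X_[mo] : {mpoly K[m]}) \is (mdeg mo).-homog by rewrite dhomogX.
rewrite (pih_homog _ hX') (_ : (mdeg mo + e == d) = (mdeg mo == d - e)%N).
  by case: ifP => _; rewrite ?mul0r ?scaler0.
by apply/eqP/eqP; lia.
Qed.

Lemma mem_ideal_pih gs d p : homog_gens gs -> mem_ideal gs p -> mem_ideal gs (pih d p).
Proof.
move=> hg /mem_idealP[f ->]; rewrite linear_sum /=; apply: mem_ideal_sum => i _.
have [e he] := hg _ (mem_nth 0 (ltn_ord i)).
rewrite (pihM _ _ he); case: ifP => _; last exact: mem_ideal0.
exact/mem_idealMl/mem_ideal_gen/mem_nth.
Qed.

Lemma mem_ideal_homog_parts gs p : (forall d, mem_ideal gs (pih d p)) -> mem_ideal gs p.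
Proof.
by move=> h; rewrite (pihomog_partitionE (leqnn (mmeasure mdeg p))); apply: mem_ideal_sum.
Qed.

Lemma pos_homog_gens_proper gs : pos_homog_gens gs -> ~ mem_ideal gs 1.
Proof.
move=> hg /mem_idealP[f hf].
suff : pih 0 (1 : {mpoly K[m]}) = 0.
  by rewrite (pih_homog _ (dhomog1 _ _)) => /eqP; rewrite oner_eq0.
rewrite hf linear_sum /= big1 // => i _.
have [e e0 he] := hg _ (mem_nth 0 (ltn_ord i)).
by rewrite (pihM _ _ he) leqn0 (negbTE (lt0n_neq0 e0)).
Qed.

(* Induction on the degree: if [p b] lies in [(gs)], then [p] is congruent modulo [(gs)] to
   some [t a] with [t] homogeneous of smaller degree and [t b] again in [(gs)]. *)
Lemma nonzerodiv_rcons_graded gs a b : pos_homog_gens gs -> pos_homog a -> pos_homog b ->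
  nonzerodiv gs a -> nonzerodiv (rcons gs a) b -> nonzerodiv gs b.
Proof.
move=> hg [ea ea0 ha] [eb eb0 hb] nza nzb.
have hg' := pos_homog_gens_homog hg.
suff hom d p : p \is d.-homog -> mem_ideal gs (p * b) -> mem_ideal gs p.
  move=> p hpb; apply: mem_ideal_homog_parts => d; apply: (hom d); first exact: pihomogP.
  by have := mem_ideal_pih (d + eb) hg' hpb; rewrite (pihM _ _ hb) leq_addl addnK.
elim/ltn_ind: d p => d ih p hp hpb.
have /nzb/mem_ideal_rcons [t ht] := mem_ideal_rconsr a hpb.
have := mem_ideal_pih d hg' ht; rewrite linearB /= (pih_homog _ hp) eqxx (pihM _ _ ha).
case: (leqP ea d) => hed; last by rewrite subr0.
set t1 := pih (d - ea) t => hpt.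
have : mem_ideal gs ((t1 * b) * a).
  have -> : t1 * b * a = p * b - (p - t1 * a) * b by rewrite mulrBl opprB addrC subrK mulrAC.
  exact/mem_idealB/mem_idealMr.
move/nza/(ih (d - ea)%N _ _ (pihomogP _ _ _)) => h1.
rewrite -(subrK (t1 * a) p); apply/mem_idealD/mem_idealMr/h1 => //.
by rewrite ltn_subrL ea0 (leq_trans ea0 hed).
Qed.

Lemma nonzerodiv_swap gs a b : nonzerodiv gs a -> nonzerodiv (rcons gs a) b ->
  nonzerodiv gs b -> nonzerodiv (rcons gs b) a.
Proof.
move=> nza nzb nzb' g /mem_ideal_rcons [t ht].
have /nzb/mem_ideal_rcons [t' ht'] : mem_ideal (rcons gs a) (t * b).
  by apply/mem_ideal_rcons; exists g; rewrite -opprB; apply: mem_idealN.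
have /nza h : mem_ideal gs ((g - t' * b) * a).
  have -> : (g - t' * b) * a = (g * a - t * b) + (t - t' * a) * b.
    by rewrite mulrBl mulrBl mulrAC addrA subrK.
  exact/mem_idealD/mem_idealMr.
by apply/mem_ideal_rcons; exists t'.
Qed.

Lemma regular_mod_swap gs a b s : pos_homog_gens gs -> pos_homog a -> pos_homog b ->
  regular_mod gs (a :: b :: s) -> regular_mod gs (b :: a :: s).
Proof.
move=> hg ha hb /= [nza [nzb hr]].
have nzb' := nonzerodiv_rcons_graded hg ha hb nza nzb.
do 2?split=> //; first exact: nonzerodiv_swap.
apply: regular_mod_eq_ideal hr; apply: eq_ideal_perm.
by rewrite -!cats1 -!catA perm_cat2l /= (perm_catC [:: a] [:: b]).
Qed.

Lemma regular_mod_rot1 gs x s : pos_homog_gens gs -> pos_homog x -> pos_homog_gens s ->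
  regular_mod gs (x :: s) -> regular_mod gs (rcons s x).
Proof.
elim: s gs => [//|y s ih] gs hg hx /pos_homog_gens_cons [hy hs] /= h.
have /= [nzy hr] := regular_mod_swap hg hx hy h.
by split=> //; apply: ih => //; apply: pos_homog_gens_rcons.
Qed.

Lemma regular_mod_rotr1 gs x s : pos_homog_gens gs -> pos_homog x -> pos_homog_gens s ->
  regular_mod gs (rcons s x) -> regular_mod gs (x :: s).
Proof.
elim: s gs => [//|y s ih] gs hg hx /pos_homog_gens_cons [hy hs] /= [nzy hr].
apply: regular_mod_swap => //=; split=> //.
by apply: ih => //; apply: pos_homog_gens_rcons.
Qed.

End Graded.

Section Composition.
Variables (K : fieldType) (m k : nat).
Implicit Types (p : {mpoly K[m]}) (I : seq {mpoly K[k]}).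

Lemma mem_ideal_cong_comp I (T1 T2 : m.-tuple {mpoly K[k]}) p :
  (forall i, mem_ideal I (tnth T1 i - tnth T2 i)) -> mem_ideal I ((p \mPo T1) - (p \mPo T2)).
Proof.
move=> h; rewrite !comp_mpolyE -sumrB; apply: mem_ideal_sum => mo _.
rewrite -scalerBr; apply: mem_idealZ.
apply: (big_ind2 (fun u v => mem_ideal I (u - v))) => [|? ? ? ?|i _].
- by rewrite subrr; apply: mem_ideal0.
- exact: mem_ideal_congM.
- exact: mem_ideal_congX.
Qed.

Lemma mem_ideal_comp (gs : seq {mpoly K[m]}) (T : m.-tuple {mpoly K[k]}) p :
  mem_ideal gs p -> mem_ideal (map (comp_mpoly T) gs) (p \mPo T).
Proof.
move=> /mem_idealP[f ->]; rewrite raddf_sum /=; apply: mem_ideal_sum => i _.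
by rewrite rmorphM /=; apply/mem_idealMl/mem_ideal_gen/map_f/mem_nth.
Qed.

Lemma comp_mpoly_sum (I : Type) (r : seq I) (P : pred I) (F : I -> {mpoly K[m]})
  (T : m.-tuple {mpoly K[k]}) :
  (\sum_(i <- r | P i) F i) \mPo T = \sum_(i <- r | P i) (F i \mPo T).
Proof. exact: raddf_sum. Qed.

Lemma comp_mpoly_homog (T : m.-tuple {mpoly K[k]}) p d :
  (forall i, tnth T i \is 1.-homog) -> p \is d.-homog -> p \mPo T \is d.-homog.
Proof.
move=> hT hp; rewrite comp_mpolyE big_seq; apply: rpred_sum => mo hmo.
have -> : d = mdeg mo by rewrite -(dhomog_mf hp hmo).
rewrite mdegE; apply/rpredZ/(big_ind2 (fun e (q : {mpoly K[k]}) => q \is e.-homog)).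
- exact: dhomog1.
- by move=> ? ? ? ?; apply: dhomogM.
- by move=> i _; rewrite -[X in X.-homog]mul1n; apply: dhomogMn.
Qed.

Lemma comp_mpolyA l p (T : m.-tuple {mpoly K[k]}) (U : k.-tuple {mpoly K[l]}) :
  (p \mPo T) \mPo U = p \mPo [tuple tnth T i \mPo U | i < m].
Proof.
rewrite (comp_mpolyE p T) (comp_mpolyE p) raddf_sum /=; apply: eq_bigr => mo _.
rewrite linearZ /= rmorph_prod /=; congr (_ *: _); apply: eq_bigr => i _.
by rewrite rmorphXn /= tnth_map tnth_ord_tuple.
Qed.

End Composition.

Lemma linear_formE (K : fieldType) (m : nat) (p : {mpoly K[m]}) :
  p \is 1.-homog -> p = \sum_(i < m) p@_U_(i) *: 'X_i.
Proof.
move=> hp; apply/mpolyP => mo; rewrite raddf_sum /=.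
case: (mdeg1P mo) => [[j /eqP ->]|ne].
  rewrite (bigD1 j) //= mcoeffZ mcoeffXU eqxx mulr1 big1 ?addr0 //.
  by move=> i /negbTE hij; rewrite mcoeffZ mcoeffXU hij mulr0.
rewrite big1 => [|i _]; last first.
  rewrite mcoeffZ mcoeffX; case: eqP => [e|_]; last by rewrite mulr0.
  by case: ne; exists i; rewrite e.
by apply: (dhomog_nemf_coeff hp); apply/eqP => /eqP/mdeg1P.
Qed.

Lemma linear_form_coef_neq0 (K : fieldType) (m : nat) (p : {mpoly K[m]}) :
  p \is 1.-homog -> p != 0 -> exists j, p@_U_(j) != 0.
Proof.
move=> hp /eqP p0; apply: NNPP => hno; apply: p0; rewrite (linear_formE hp) big1 // => i _.
by case: (eqVneq p@_U_(i) 0) => [->|ne]; [rewrite scale0r | case: hno; exists i].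
Qed.

Section Elimination.
Variables (K : fieldType) (n : nat) (z : {mpoly K[n.+1]}) (j : 'I_n.+1).
Hypothesis hz : z \is 1.-homog.
Hypothesis hzj : z@_U_(j) != 0.
Implicit Types (I : seq {mpoly K[n.+1]}) (g b : {mpoly K[n.+1]}).

Local Notation a i := z@_U_(i).

Definition drop_var (i : 'I_n.+1) : {mpoly K[n]} :=
  if unlift j i is Some i' then 'X_i' else 0.

(* [x_j] solved from [z = 0] *)
Definition solved_var : {mpoly K[n]} := - (a j)^-1 *: \sum_(i < n.+1) a i *: drop_var i.

(* The substitution [S -> K[n]] realising [S/(z) = K[n]]: [x_j] goes to [solved_var] and
   the other variables to those of [K[n]]; [incl_tuple] is a section of it. *)
Definition proj_tuple : n.+1.-tuple {mpoly K[n]} :=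
  [tuple if i == j then solved_var else drop_var i | i < n.+1].

Definition incl_tuple : n.-tuple {mpoly K[n.+1]} := [tuple 'X_(lift j i) | i < n].

Lemma comp_proj_XU i : 'X_i \mPo proj_tuple = tnth proj_tuple i.
Proof. by rewrite comp_mpolyXU -tnth_nth. Qed.

Lemma comp_proj_z : z \mPo proj_tuple = 0.
Proof.
rewrite {1}(linear_formE hz) raddf_sum /=.
under eq_bigr do rewrite linearZ /= comp_proj_XU tnth_mktuple.
rewrite (bigD1 j) //= eqxx /solved_var scalerA mulrN mulfV // scaleN1r.
rewrite (bigD1 j) //= /drop_var unlift_none scaler0 add0r.
by rewrite [X in _ + X](eq_bigr (fun i => a i *: drop_var i)) ?addNr // => i /negbTE ->.
Qed.

Lemma proj_tuple_homog i : tnth proj_tuple i \is 1.-homog.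
Proof.
have hdrop i0 : drop_var i0 \is 1.-homog.
  by rewrite /drop_var; case: unlift => [i'|]; rewrite ?dhomog0 // dhomogX /= mdeg1.
rewrite tnth_mktuple; case: ifP => _ //.
by apply/rpredZ/rpred_sum => i0 _; apply: rpredZ.
Qed.

Lemma comp_incl_proj h : (h \mPo incl_tuple) \mPo proj_tuple = h.
Proof.
rewrite comp_mpolyA -[RHS]comp_mpoly_id; congr comp_mpoly.
apply: eq_mktuple => i; rewrite tnth_mktuple comp_proj_XU tnth_mktuple.
by rewrite eq_sym (negbTE (neq_lift j i)) /drop_var liftK.
Qed.

Lemma comp_drop_var_incl i : drop_var i \mPo incl_tuple = if i == j then 0 else 'X_i.
Proof.
rewrite /drop_var; case: unliftP => [i' ->|->]; last by rewrite eqxx comp_mpoly0.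
by rewrite eq_sym (negbTE (neq_lift j i')) comp_mpolyXU -tnth_nth tnth_mktuple.
Qed.

Lemma mem_ideal_comp_proj_incl I g : mem_ideal (z :: I) (((g \mPo proj_tuple) \mPo incl_tuple) - g).
Proof.
rewrite comp_mpolyA -{2}[g]comp_mpoly_id; apply: mem_ideal_cong_comp => i.
rewrite !tnth_mktuple; case: (eqVneq i j) => [->|ne]; last first.
  by rewrite comp_drop_var_incl (negbTE ne) subrr; apply: mem_ideal0.
rewrite /solved_var comp_mpolyZ comp_mpoly_sum.
rewrite (eq_bigr (fun i => a i *: (if i == j then 0 else 'X_i))); last first.
  by move=> i0 _; rewrite comp_mpolyZ comp_drop_var_incl.
have -> : \sum_(i < n.+1) a i *: (if i == j then 0 else 'X_i) = z - a j *: 'X_j.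
  rewrite [X in _ = X - _](linear_formE hz) (bigD1 j) //= eqxx scaler0 add0r.
  rewrite [X in _ = X - _](bigD1 j) //= addrAC subrr add0r.
  by apply: eq_bigr => i0 /negbTE ->.
rewrite scalerBr scalerA mulNr mulVf // scaleN1r opprK addrK.
exact/mem_idealZ/mem_ideal_gen/mem_head.
Qed.

Lemma sub_mem_ideal_proj_incl I p :
  mem_ideal (map (comp_mpoly incl_tuple) (map (comp_mpoly proj_tuple) I)) p -> mem_ideal (z :: I) p.
Proof.
apply: sub_mem_ideal => _ /mapP [_ /mapP [g hg ->] ->].
rewrite -[_ \mPo _](subrK g) addrC; apply: mem_idealD.
  by apply: mem_ideal_gen; rewrite inE hg orbT.
exact: mem_ideal_comp_proj_incl.
Qed.

Lemma mem_ideal_proj I g :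
  mem_ideal (map (comp_mpoly proj_tuple) I) (g \mPo proj_tuple) <-> mem_ideal (z :: I) g.
Proof.
split=> [/(mem_ideal_comp incl_tuple)/sub_mem_ideal_proj_incl h|/(mem_ideal_comp proj_tuple)].
  rewrite -[g](subKr ((g \mPo proj_tuple) \mPo incl_tuple)).
  exact/mem_idealB/mem_ideal_comp_proj_incl.
by rewrite /= comp_proj_z; apply: mem_ideal_cons0.
Qed.

Lemma nonzerodiv_proj I b :
  nonzerodiv (z :: I) b -> nonzerodiv (map (comp_mpoly proj_tuple) I) (b \mPo proj_tuple).
Proof.
by move=> hb h; rewrite -[h]comp_incl_proj -rmorphM /= !mem_ideal_proj; apply: hb.
Qed.

Lemma regular_mod_proj I s :
  regular_mod (z :: I) s ->
  regular_mod (map (comp_mpoly proj_tuple) I) (map (comp_mpoly proj_tuple) s).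
Proof.
elim: s I => //= b s ih I [h1 h2]; split; first exact: nonzerodiv_proj.
by rewrite -map_rcons; apply: ih.
Qed.

Lemma proj_CI_quadric_SAGA P : size P = n -> (forall g, g \in P -> g \is 2.-homog) ->
  regular_mod [::] (z :: P) -> CI_quadric_SAGA (map (comp_mpoly proj_tuple) P).
Proof.
move=> sP hP [_ regP].
have hom q : q \in map (comp_mpoly proj_tuple) P -> q \is 2.-homog.
  by case/mapP=> p /hP hp ->; apply: comp_mpoly_homog => //; apply: proj_tuple_homog.
do 2?split; rewrite ?size_map //; apply/regular_seqE; split.
  by apply: pos_homog_gens_proper => q /hom hq; exists 2%N.
exact: (regular_mod_proj (I := [::])).
Qed.

End Elimination.

Section RegularExchange.
Variables (K : fieldType) (m : nat).
Implicit Types (gs A B P : seq {mpoly K[m]}) (p q z w : {mpoly K[m]}).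

Lemma mem_ideal_homog_lincomb gs d p : (forall g, g \in gs -> g \is d.-homog) ->
  p \is d.-homog -> mem_ideal gs p -> exists c, p = lincomb c gs.
Proof.
move=> hgs hp /mem_idealP[f hf].
exists (mkseq (fun i => (pih 0 (f i))@_0) (size gs)).
rewrite -(pihomog_dE hp) hf linear_sum /=; apply: eq_bigr => i _.
rewrite (pihM _ _ (hgs _ (mem_nth 0 (ltn_ord i)))) leqnn subnn nth_mkseq //.
by rewrite -mul_mpolyC -(homog0E (pihomogP _ _ _)).
Qed.

Lemma lincomb_last_nonzero c gs p : p = lincomb c gs -> p != 0 ->
  exists k, [/\ (k < size gs)%N, c`_k != 0 & mem_ideal (take k gs) (p - c`_k *: gs`_k)].
Proof.
elim/last_ind: gs p => [|gs q ih] p ->; first by rewrite /lincomb big_ord0 eqxx.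
rewrite lincomb_rcons; case: (eqVneq c`_(size gs) 0) => [-> nz|ck0 _].
  rewrite scale0r addr0 in nz *; have [k [hk ck hmem]] := ih _ erefl nz.
  exists k; rewrite size_rcons ltnS ltnW // nth_rcons hk.
  by rewrite -cats1 takel_cat 1?ltnW.
exists (size gs); rewrite size_rcons ltnS leqnn nth_rcons ltnn eqxx addrK.
by rewrite -cats1 take_size_cat //; split=> //; apply: mem_ideal_lincomb => g; apply: mem_ideal_gen.
Qed.

Section Exchange.
Variables (A : seq {mpoly K[m]}) (p q : {mpoly K[m]}) (c : K).
Hypotheses (c0 : c != 0) (hpq : mem_ideal A (p - c *: q)).

Lemma eq_ideal_rcons_exchange : eq_ideal (rcons A q) (rcons A p).
Proof.
have hA r g : g \in A -> mem_ideal (rcons A r) g.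
  by move=> gA; apply: mem_ideal_gen; rewrite mem_rcons inE gA orbT.
have hr r : mem_ideal (rcons A r) r by apply/mem_ideal_gen; rewrite mem_rcons mem_head.
apply: eq_idealP => g; rewrite mem_rcons inE => /orP[/eqP ->|/hA //].
  rewrite -[q]scale1r -(mulVf c0) -scalerA -[c *: q](subKr p).
  exact/mem_idealZ/mem_idealB/mem_ideal_rconsr.
by rewrite -(subrK (c *: q) p); apply/mem_idealD/mem_idealZ/hr/mem_ideal_rconsr.
Qed.

Lemma nonzerodiv_exchange : nonzerodiv A q -> nonzerodiv A p.
Proof.
move=> nzq g hg; rewrite -[g]scale1r -(mulVf c0) -scalerA; apply/mem_idealZ/nzq.
have -> : (c *: g) * q = g * p - g * (p - c *: q) by rewrite -mulrBr subKr -scalerCA.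
exact/mem_idealB/mem_idealMl.
Qed.

End Exchange.

(* [p] is a combination of the generators with scalar coefficients, so it can take the place
   of the last one it involves; as regular sequences of forms may be permuted, [p] can then
   be moved to the end. *)
Lemma regular_exchange_last qs d p : (0 < d)%N -> (forall q, q \in qs -> q \is d.-homog) ->
  regular_mod [::] qs -> p \is d.-homog -> p != 0 -> mem_ideal qs p ->
  exists P, [/\ size P = (size qs).-1, {subset P <= qs}, eq_ideal qs (rcons P p)
              & regular_mod [::] (rcons P p)].
Proof.
move=> d0 hq hreg hp p0 /(mem_ideal_homog_lincomb hq hp) [c hc].
have [k [hk ck0 hdiff]] := lincomb_last_nonzero hc p0.
set A := take k qs; set B := drop k.+1 qs.
have eqs : qs = A ++ qs`_k :: B by rewrite /A /B -drop_nth // cat_take_drop.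
have posq : pos_homog_gens qs by move=> q /hq; exists d.
have posA : pos_homog_gens A by move=> g /mem_take /posq.
have posB : pos_homog_gens B by move=> g /mem_drop /posq.
have exch := eq_ideal_rcons_exchange ck0 hdiff.
have /regular_mod_cat [regA /= [nzq regB]] : regular_mod [::] (A ++ qs`_k :: B) by rewrite -eqs.
have regAB : regular_mod A (rcons B p).
  apply: (regular_mod_rot1 posA (ex_intro2 _ _ d d0 hp) posB).
  exact: (conj (nonzerodiv_exchange ck0 hdiff nzq) (regular_mod_eq_ideal exch regB)).
exists (A ++ B); split.
- by rewrite eqs !size_cat /= addnS.
- by move=> g; rewrite eqs !mem_cat inE => /orP[->|->]; rewrite ?orbT.
- move=> g; rewrite eqs -cat_rcons (eq_ideal_cat B exch g) -!cats1 -!catA.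
  by apply: (eq_ideal_perm _ g); rewrite perm_cat2l perm_catC.
- by rewrite rcons_cat; apply/regular_mod_cat.
Qed.

Lemma regular_mod_linear_factor P z w : pos_homog_gens P -> pos_homog z ->
  regular_mod [::] (rcons P (z * w)) -> regular_mod [::] (z :: P) /\ nonzerodiv P w.
Proof.
move=> posP hz /regular_mod_rcons [regP nzzw]; split; last exact: nonzerodivMl nzzw.
apply: regular_mod_rotr1 => //; apply/regular_mod_rcons; split=> //.
exact: nonzerodivMr nzzw.
Qed.

Lemma annihilator_exchange qs P z w : eq_ideal qs (rcons P (z * w)) -> nonzerodiv P w ->
  forall g, mem_ideal qs (g * w) <-> mem_ideal (z :: qs) g.
Proof.
move=> eqs nzw g; have sub_qs p : mem_ideal P p -> mem_ideal qs p.
  by move=> /(mem_ideal_rconsr (z * w))/eqs.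
split=> [/eqs/mem_ideal_rcons [t ht]|/mem_ideal_cons [t ht]].
  by apply/mem_ideal_cons; exists t; apply/sub_qs/nzw; rewrite mulrBl -mulrA.
rewrite -(subrK (t * z * w) (g * w)) -mulrBl -mulrA.
apply/mem_idealD/mem_idealMl; first exact: mem_idealMr.
by apply/eqs/mem_ideal_gen; rewrite mem_rcons mem_head.
Qed.

End RegularExchange.

Lemma partial_choice (A : Type) (x0 : A) (Q : nat -> A -> Prop) :
  exists f : nat -> A, forall i, (exists a, Q i a) -> Q i (f i).
Proof. by exists (fun i => epsilon (inhabits x0) (Q i)) => i; apply: epsilon_spec. Qed.

Lemma ex_max_bounded (Q : nat -> Prop) N : Q 0%N -> (forall k, Q k -> (k <= N)%N) ->
  exists d, Q d /\ forall k, Q k -> (k <= d)%N.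
Proof.
elim: N => [|N ih] q0 hb; first by exists 0%N; split=> // k /hb.
case: (classic (Q N.+1)) => hN; first by exists N.+1.
apply: ih => // k hk; have := hb k hk; rewrite leq_eqVlt ltnS => /orP[/eqP e|//].
by move: hk; rewrite e.
Qed.

Section IndependenceModIdeal.
Variables (K : fieldType) (m : nat).
Implicit Types (J A C X vs : seq {mpoly K[m]}) (P : {mpoly K[m]} -> Prop) (b : {mpoly K[m]}).

(* more than [N] vectors congruent to combinations of [N] fixed ones are dependent,
   since a [size vs x N] matrix with [N < size vs] has a nonzero left kernel *)
Lemma indep_mod_span_size J vs N (u : 'I_N -> {mpoly K[m]}) (beta : nat -> 'I_N -> K) :
  (forall i, (i < size vs)%N -> mem_ideal J (vs`_i - \sum_(t < N) beta i t *: u t)) ->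
  indep_mod J vs -> (size vs <= N)%N.
Proof.
move=> hb hind; rewrite leqNgt; apply/negP => hN.
pose B : 'M[K]_(size vs, N) := \matrix_(i, j) beta i j.
have /rowV0Pn [v /sub_kermxP hv vn0] : kermx B != 0.
  rewrite -mxrank_eq0 mxrank_ker subn_eq0 -ltnNge.
  exact: leq_ltn_trans (rank_leq_col B) hN.
pose c := [seq v 0 i | i <- enum 'I_(size vs)].
have hc (i : 'I_(size vs)) : c`_i = v 0 i.
  by rewrite (nth_map i) ?size_enum_ord // nth_ord_enum.
have : mem_ideal J (lincomb c vs).
  have -> : lincomb c vs = \sum_(i < size vs) c`_i *: (vs`_i - \sum_(t < N) beta i t *: u t)
      + \sum_(t < N) (v *m B) 0 t *: u t.
    have -> : \sum_(t < N) (v *m B) 0 t *: u t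
        = \sum_(i < size vs) c`_i *: \sum_(t < N) beta i t *: u t.
      under eq_bigr do rewrite !mxE scaler_suml.
      rewrite exchange_big /=; apply: eq_bigr => i _; rewrite scaler_sumr.
      by apply: eq_bigr => t _; rewrite mxE hc scalerA.
    by rewrite -big_split /=; apply: eq_bigr => i _; rewrite -scalerDr subrK.
  rewrite hv [X in _ + X]big1 ?addr0 => [|t _]; last by rewrite mxE scale0r.
  by apply: mem_ideal_sum => i _; apply/mem_idealZ/hb.
move/hind => h; apply/negP: vn0; rewrite negbK; apply/eqP/rowP => i.
by rewrite mxE -hc; apply: h.
Qed.

Lemma dim_mod_exists J P N (u : 'I_N -> {mpoly K[m]}) :
  (forall g, P g -> exists beta : 'I_N -> K, g = \sum_(t < N) beta t *: u t) ->
  exists d, dim_mod J P d.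
Proof.
move=> hsp; pose Q d := exists gs, [/\ size gs = d, forall g, g \in gs -> P g & indep_mod J gs].
have bound gs : (forall g, g \in gs -> P g) -> indep_mod J gs -> (size gs <= N)%N.
  move=> hP hi; have [f hf] := partial_choice (fun _ => 0 : K)
    (fun i beta => gs`_i = \sum_(t < N) beta t *: u t).
  apply: (indep_mod_span_size (u := u) (beta := f)) hi => i hi'.
  rewrite -hf ?subrr; first exact: mem_ideal0.
  by apply: hsp; apply/hP/mem_nth.
have [|k [gs [<- hP hi]]|d [[gs [hs hP hi]] hmax]] := @ex_max_bounded Q N.
- by exists [::]; split=> // c _ [].
- exact: bound.
exists d; split; first by exists gs.
by move=> gs' hP' hi'; apply: hmax; exists gs'.
Qed.

Lemma not_indep_mod_rcons J X b : indep_mod J X -> ~ indep_mod J (rcons X b) ->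
  exists beta : 'I_(size X) -> K, mem_ideal J (b - \sum_(t < size X) beta t *: X`_t).
Proof.
move=> hX hXb; apply: NNPP => hno; apply: hXb => c hc.
change (mem_ideal J (lincomb c (rcons X b))) in hc.
have hl : c`_(size X) = 0.
  apply: NNPP => /eqP hg; apply: hno; exists (fun t => - (c`_t / c`_(size X))).
  have -> : b - \sum_(t < size X) - (c`_t / c`_(size X)) *: X`_t =
      (c`_(size X))^-1 *: lincomb c (rcons X b).
    rewrite lincomb_rcons scalerDr scalerA mulVf // scale1r addrC.
    rewrite /lincomb scaler_sumr -sumrN; congr (_ + _); apply: eq_bigr => i _.
    by rewrite scaleNr opprK scalerA mulrC.
  exact: mem_idealZ.
rewrite lincomb_rcons hl scale0r addr0 in hc.
by move=> i; rewrite size_rcons ltnS leq_eqVlt => /orP[/eqP ->|/(hX _ hc)].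
Qed.

Lemma indep_mod_extend J A Bf k : indep_mod J A -> indep_mod J Bf -> (size A + k <= size Bf)%N ->
  exists C, [/\ size C = k, {subset C <= Bf} & indep_mod J (A ++ C)].
Proof.
move=> hA hB; elim: k => [|k ih] hk; first by exists [::]; rewrite cats0.
have [C [hs hsub hi]] := ih ltac:(lia).
suff [b hb hi'] : exists2 b, b \in Bf & indep_mod J (rcons (A ++ C) b).
  exists (rcons C b); split; rewrite -?rcons_cat ?size_rcons ?hs //.
  by move=> g; rewrite mem_rcons inE => /orP[/eqP ->|/hsub].
apply: NNPP => hno; have [f hf] := partial_choice (fun _ => 0 : K) (fun i beta =>
  mem_ideal J (Bf`_i - \sum_(t < size (A ++ C)) beta t *: (A ++ C)`_t)).
suff : (size Bf <= size (A ++ C))%N by rewrite size_cat hs; lia.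
apply: (indep_mod_span_size (u := fun t : 'I_(size (A ++ C)) => (A ++ C)`_t) (beta := f)) hB.
move=> i hi'; apply/hf/not_indep_mod_rcons => // hind.
by apply: hno; exists Bf`_i; rewrite ?mem_nth.
Qed.

Lemma indep_mod_catr J A C : indep_mod J (A ++ C) ->
  forall al ga, mem_ideal J (lincomb al A + lincomb ga C) -> forall j, (j < size C)%N -> ga`_j = 0.
Proof.
move=> hi al ga h j hj.
pose c := mkseq (fun i => al`_i) (size A) ++ ga.
have hc : lincomb c (A ++ C) = lincomb al A + lincomb ga C.
  rewrite lincomb_cat /c drop_size_cat ?size_mkseq //; congr (_ + _).
  by apply: eq_bigr => i _; rewrite nth_cat size_mkseq ltn_ord nth_mkseq.
rewrite -hc in h; have := hi c h (size A + j)%N.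
by rewrite size_cat ltn_add2l hj /c nth_cat size_mkseq ltnNge leq_addr /= addKn => ->.
Qed.

Lemma indep_mod_catP J A C :
  (forall al ga, mem_ideal J (lincomb al A + lincomb ga C) ->
     (forall i, (i < size A)%N -> al`_i = 0) /\ (forall j, (j < size C)%N -> ga`_j = 0)) ->
  indep_mod J (A ++ C).
Proof.
move=> h c hc i; change (mem_ideal J (lincomb c (A ++ C))) in hc.
rewrite lincomb_cat in hc; have [h1 h2] := h _ _ hc.
rewrite size_cat => hi; case: (ltnP i (size A)) => hiA; first exact: h1.
by have := h2 (i - size A)%N; rewrite nth_drop subnKC // => ->; rewrite // ltn_subLR.
Qed.

Lemma homog_finite_span e : exists N (u : 'I_N -> {mpoly K[m]}), forall g, g \is e.-homog ->
  exists beta : 'I_N -> K, g = \sum_(t < N) beta t *: u t.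
Proof.
pose T : finType := 'X_{1..m < e.+1}.
exists #|T|, (fun t => 'X_[val (enum_val t)]) => g hg.
exists (fun t => g@_(val (enum_val t))).
have hs : (msize g <= e.+1)%N.
  rewrite msizeE; apply/bigmax_leqP_seq => mo hmo _.
  by rewrite ltnS (dhomog_mf hg hmo).
rewrite {1}(mpolywE hs) (reindex (fun t : 'I_#|T| => enum_val t)) //=.
exact/onW_bij/enum_val_bij.
Qed.

Lemma dimR_exists J e : exists d, dimR J e d.
Proof. by have [N [u hu]] := homog_finite_span e; apply: dim_mod_exists hu. Qed.

Lemma dimK_exists J e q : exists d, dimK J e q d.
Proof.
have [N [u hu]] := homog_finite_span e.
by apply: (@dim_mod_exists J _ N u) => g [/hu].
Qed.

End IndependenceModIdeal.

Section Dimensions.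
Variables (K : fieldType) (m : nat) (qs : seq {mpoly K[m]}) (z w : {mpoly K[m]}) (e : nat).
Hypotheses (hqs : homog_gens qs) (hz : z \is e.-homog).
Hypothesis ann : forall g, mem_ideal qs (g * w) <-> mem_ideal (z :: qs) g.
Lemma annihilator_homog_factor s g : g \is (s + e).-homog -> mem_ideal qs (g * w) ->
  exists h, h \is s.-homog /\ mem_ideal qs (g - h * z).
Proof.
move=> hg /ann/mem_ideal_cons [t ht]; exists (pih s t); split; first exact: pihomogP.
have := mem_ideal_pih (s + e) hqs ht; rewrite linearB /= (pih_homog _ hg) eqxx.
by rewrite (pihM _ _ hz) leq_addl addnK.
Qed.

Variables (s d2 d3 : nat).
Hypotheses (dim2 : dimR qs s d2) (dim3 : dimK qs s z d3).

(* Multiplication by [z] maps the part of a basis of [R^s] extending a basis of [K^s_z]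
   to an independent family in [K^(s+e)_w]. *)
Lemma annihilator_indep_lower : exists gs, size gs = (d2 - d3)%N /\
  (forall g, g \in gs -> g \is (s + e).-homog /\ mem_ideal qs (g * w)) /\ indep_mod qs gs.
Proof.
move: dim2 dim3 => [[Bf [sB [PB iB]]] bd2] [[A [sA [PA iA]]] bd3].
have d32 : (d3 <= d2)%N by rewrite -sA; apply: bd2 => // g /PA [].
have [C [sC CB iAC]] := @indep_mod_extend _ _ _ _ _ (d2 - d3) iA iB
  ltac:(by rewrite sA sB subnKC).
exists (map (fun c => z * c) C); split; first by rewrite size_map.
split.
  move=> _ /mapP [c hc ->]; split; first by rewrite addnC; apply/dhomogM/PB/CB.
  by apply/ann/mem_idealMr/mem_ideal_gen/mem_head.
move=> ga hga i hi; rewrite size_map in hi.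
have hy : mem_ideal qs (lincomb ga C * z).
  move: hga; congr mem_ideal; rewrite /lincomb size_map mulr_suml.
  by apply: eq_bigr => k _; rewrite (nth_map 0) // -scalerAl mulrC.
have /not_indep_mod_rcons : ~ indep_mod qs (rcons A (lincomb ga C)).
  move=> hind; suff : (size (rcons A (lincomb ga C)) <= d3)%N by rewrite size_rcons sA ltnn.
  apply: bd3 hind => g; rewrite mem_rcons inE.
  by case/orP=> [/eqP ->|/PA //]; split=> //; apply: lincomb_homog => x /CB /PB.
move=> /(_ iA) [beta hb].
apply: (indep_mod_catr iAC (al := [seq - beta t | t <- enum 'I_(size A)])) hi.
move: hb; congr mem_ideal; rewrite addrC; congr (_ + _).
rewrite /lincomb -sumrN; apply: eq_bigr => t _.
by rewrite (nth_map t) ?size_enum_ord // nth_ord_enum scaleNr.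
Qed.

(* Writing the members of [gs] as [h z] with [h] in [R^s], the [h]'s extend a basis of
   [K^s_z] to an independent family of [R^s]. *)
Lemma annihilator_indep_upper gs :
  (forall g, g \in gs -> g \is (s + e).-homog /\ mem_ideal qs (g * w)) ->
  indep_mod qs gs -> (size gs <= d2 - d3)%N.
Proof.
move: dim2 dim3 => [_ bd2] [[A [sA [PA iA]]] _] PG iG.
have [f hf] := partial_choice (0 : {mpoly K[m]}) (fun i h =>
   h \is s.-homog /\ mem_ideal qs (gs`_i - h * z)).
set H := mkseq f (size gs).
have sH : size H = size gs by rewrite size_mkseq.
have hH i : (i < size gs)%N -> H`_i \is s.-homog /\ mem_ideal qs (gs`_i - H`_i * z).
  move=> hi; rewrite nth_mkseq //; apply: hf.
  by case: (PG _ (mem_nth 0 hi)); apply: annihilator_homog_factor.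
have iAH : indep_mod qs (A ++ H).
  apply: indep_mod_catP => al ga hag.
  have ga0 j : (j < size H)%N -> ga`_j = 0.
    rewrite sH; apply: iG; change (mem_ideal qs (lincomb ga gs)).
    have -> : lincomb ga gs = (lincomb al A + lincomb ga H) * z - lincomb al A * z
        + \sum_(i < size gs) ga`_i *: (gs`_i - H`_i * z).
      rewrite mulrDl [_ + lincomb ga H * z]addrC addrK /lincomb sH mulr_suml -big_split /=.
      by apply: eq_bigr => i _; rewrite -scalerAl scalerBr addrC subrK.
    apply/mem_idealD/mem_ideal_sum => [|i _]; last exact/mem_idealZ/(hH _ (ltn_ord i)).2.
    apply: mem_idealB; first exact: mem_idealMr.
    rewrite /lincomb mulr_suml.
    apply: mem_ideal_sum => i _; rewrite -scalerAl.
    exact/mem_idealZ/(PA _ (mem_nth 0 (ltn_ord i))).2.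
  have H0 : lincomb ga H = 0 by apply: big1 => i _; rewrite ga0 // scale0r.
  split=> //; apply: iA; change (mem_ideal qs (lincomb al A)).
  by rewrite -[lincomb al A]addr0 -H0.
have d32 : (d3 <= d2)%N by rewrite -sA; apply: bd2 iA => g /PA [].
rewrite leq_subRL // -sA -sH -size_cat; apply: bd2 iAH => g.
by rewrite mem_cat => /orP[/PA [] //|/(nthP 0) [i hi <-]]; apply: (hH i _).1; rewrite -sH.
Qed.

Lemma dimK_annihilator : dimK qs (s + e) w (d2 - d3).
Proof. by split; [exact: annihilator_indep_lower | exact: annihilator_indep_upper]. Qed.

End Dimensions.

Theorem mainTheorem13 (K : closedFieldType) (hK : [pchar K] =i pred0)
  (n : nat) (qs : seq {mpoly K[n.+1]}) (hR : CI_quadric_SAGA qs)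
  (w z : {mpoly K[n.+1]})
  (hw1 : w \is 1.-homog) (hz1 : z \is 1.-homog)
  (hw0 : ~ mem_ideal qs w) (hz0 : ~ mem_ideal qs z)
  (hzw : mem_ideal qs (z * w)) :
  (* (z) = (0 : w) as ideals of R = S/(qs) *)
  (forall g : {mpoly K[n.+1]}, mem_ideal qs (g * w) <-> mem_ideal (z :: qs) g)
  /\
  (* R/(z) is isomorphic, as a graded K-algebra, to a complete intersection
     SAGA of codimension n presented by quadrics *)
  (exists (qs' : seq {mpoly K[n]}) (L : n.+1.-tuple {mpoly K[n]}),
      CI_quadric_SAGA qs'
      /\ (forall i, tnth L i \is 1.-homog)
      /\ (forall g : {mpoly K[n.+1]}, mem_ideal qs' (g \mPo L) <-> mem_ideal (z :: qs) g)
      /\ (forall h : {mpoly K[n]}, exists g : {mpoly K[n.+1]}, mem_ideal qs' (h - (g \mPo L))))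
  /\
  (* dim K^s_w = dim R^(s-1) - dim K^(s-1)_z for all s >= 1 *)
  (forall s : nat, (1 <= s)%N ->
     exists d1 d2 d3 : nat,
       dimK qs s w d1 /\ dimR qs s.-1 d2 /\ dimK qs s.-1 z d3 /\ d1 = (d2 - d3)%N).
Proof.
case: hR => [sizeq [hq /regular_seqE [_ hreg]]].
have z0 : z != 0 by apply: contra_not_neq hz0 => ->; apply: mem_ideal0.
have w0 : w != 0 by apply: contra_not_neq hw0 => ->; apply: mem_ideal0.
have [P [sP subP eqs regP]] :=
  regular_exchange_last (isT : 0 < 2)%N hq hreg (dhomogM hz1 hw1) (mulf_neq0 z0 w0) hzw.
have posP : pos_homog_gens P by move=> g /subP /hq; exists 2%N.
have [regzP nzw] := regular_mod_linear_factor posP (ex_intro2 _ _ 1%N isT hz1) regP.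
have ann := annihilator_exchange eqs nzw.
split=> //; split.
  have [j hj] := linear_form_coef_neq0 hz1 z0.
  exists (map (comp_mpoly (proj_tuple z j)) P), (proj_tuple z j); split; last split.
  - by apply: proj_CI_quadric_SAGA => //; [rewrite sP sizeq | move=> g /subP /hq].
  - exact: proj_tuple_homog.
  split=> [g|h]; first by rewrite mem_ideal_proj // (eq_ideal_cons z eqs) mem_ideal_cons_rcons_mul.
  by exists (h \mPo incl_tuple K j); rewrite comp_incl_proj subrr; apply: mem_ideal0.
move=> s s1; have [d2 dim2] := dimR_exists qs s.-1; have [d3 dim3] := dimK_exists qs s.-1 z.
exists (d2 - d3)%N, d2, d3; split=> //.
have hqs : homog_gens qs by move=> q /hq; exists 2%N.
by have := dimK_annihilator hqs hz1 ann dim2 dim3; rewrite addn1 prednK.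
Qed.
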